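(* Let bidder $i$ have a constraint-homogeneous valuation with interest set $S$ and per-unit value $\hat v$, let $s^*=\lceil |S|/2\rceil$, and let $b_i'$ be the Core Deviation of $i$. For every strategy profile $b$, if bidder $i$ wins at least $s^*$ items of $S$ in the profile $(b_i'(b_i),b_{-i})$, then $u_i(b_i'(b_i),b_{-i};v_i)\ge \tfrac12 s^*\hat v-P_i(b)$.
   Context: Draft auction: $n$ bidders, items $[m]$; rounds are run while the set $I$ of remaining items is nonempty: each bidder submits a sealed bid $b_i\ge0$ and a set $X_i\subseteq I$; the highest bidder (ties arbitrary) gets her set (removed from $I$) and pays her bid times its size; winner, winning bid and bundle are announced. A strategy maps observed histories to actions. $u_i(b;v_i)$ is quasi-linear utility, $P_i(b)$ total payment of $i$ under $b$. Constraint-homogeneous valuation: $v(T)=\hat v|T\cap S|$. Items of $S$ are called units. For the original strategy $b_i$ (within profile $b$), $b_{it}$ denotes $i$'s bid in auction (round) $t$, $k_{it}$ the number of units she obtains in auction $t$ and $k_{i,<t}$ the number obtained before auction $t$. Core Deviation $b_i'$: let $b_i^*=\hat v/2$. In every auction $t$ she bids $\max\{b_i^*,b_{it}\}$. If she wins with bid $b_i^*$ (i.e. $b_i^*>b_{it}$), she takes $s^*-k_{i,<t}$ units of $S$ and drops out. If she wins with bid $b_{it}$, she takes exactly what she took under $b_i$ in auction $t$ (the $k_{it}$ units and any other items). She keeps bidding this way until she has acquired $s^*$ units or the remaining units are not enough to complete $s^*$ units. *)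

From HB Require Import structures.
From mathcomp Require Import all_boot all_order all_algebra.
Set Implicit Arguments. Unset Strict Implicit. Unset Printing Implicit Defensive.
Import Order.TTheory GRing.Theory Num.Theory.
Local Open Scope ring_scope.

Section DraftAuction.
Variables (R : realFieldType) (n m : nat).

Definition record := ('I_n * R * {set 'I_m})%type.
Definition rec_winner (r : record) : 'I_n := r.1.1.
Definition rec_bid (r : record) : R := r.1.2.
Definition rec_bundle (r : record) : {set 'I_m} := r.2.

(* Observed (public) history: the announced results of past rounds. *)
Definition history := seq record.

Definition remaining (h : history) : {set 'I_m} :=
  ~: \bigcup_(r <- h) rec_bundle r.

Definition won (j : 'I_n) (h : history) : {set 'I_m} :=
  \bigcup_(r <- h | rec_winner r == j) rec_bundle r.

Definition paid (j : 'I_n) (h : history) : R :=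
  \sum_(r <- h | rec_winner r == j) rec_bid r * (#|rec_bundle r|)%:R.

Definition action := (R * {set 'I_m})%type.
Definition strategy := history -> action.
Definition profile := 'I_n -> strategy.

Definition valid_strategy (s : strategy) : Prop :=
  forall h, 0 <= (s h).1 /\ (s h).2 \subset remaining h /\
            (remaining h != set0 -> (s h).2 != set0).

(* Highest bidder; ties are broken in favour of the smallest index. *)
Definition high_bidder (bids : 'I_n -> R) : option 'I_n :=
  [pick j | [forall k, (bids k < bids j) || ((bids k == bids j) && (j <= k)%N)]].

Definition step (b : profile) (h : history) : history :=
  match high_bidder (fun j => (b j h).1) with
  | Some w => rcons h (w, (b w h).1, (b w h).2)
  | None => h
  end.

(* Rounds are run while I is nonempty (m rounds always suffice for
   valid profiles, since each round removes at least one item). *)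
Fixpoint run (b : profile) (fuel : nat) (h : history) : history :=
  match fuel with
  | 0 => h
  | fuel'.+1 => if remaining h == set0 then h else run b fuel' (step b h)
  end.

Definition outcome (b : profile) : history := run b m [::].

Definition payment (j : 'I_n) (b : profile) : R := paid j (outcome b).

Definition utility (j : 'I_n) (v : {set 'I_m} -> R) (b : profile) : R :=
  v (won j (outcome b)) - payment j b.

Definition chval (vhat : R) (S : {set 'I_m}) (T : {set 'I_m}) : R :=
  vhat * (#|T :&: S|)%:R.

Definition upd (b : profile) (i : 'I_n) (s : strategy) : profile :=
  fun j => if j == i then s else b j.

Definition sstar (S : {set 'I_m}) : nat := uphalf #|S|.

Definition dev_active (i : 'I_n) (S : {set 'I_m}) (h : history) : bool :=
  (#|won i h :&: S| < sstar S)%N &&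
  (sstar S - #|won i h :&: S| <= #|remaining h :&: S|)%N.

(* Core Deviation of bidder i from strategy bi.  [pick h] is the set of
   s^* - k_{i,<t} units she takes when bidding b^* = vhat/2 (any choice
   satisfying [dev_pick_ok]); [drop h] is the (irrelevant) set she submits
   with bid 0 once she has dropped out (any legal choice). *)
Definition core_deviation (i : 'I_n) (vhat : R) (S : {set 'I_m})
    (pick drop : history -> {set 'I_m}) (bi : strategy) : strategy :=
  fun h =>
    if dev_active i S h then
      if (bi h).1 < vhat / 2 then (vhat / 2, pick h) else bi h
    else (0, drop h).

Definition dev_pick_ok (i : 'I_n) (S : {set 'I_m}) (pick : history -> {set 'I_m}) : Prop :=
  forall h, dev_active i S h ->
    pick h \subset remaining h :&: S /\ #|pick h| = (sstar S - #|won i h :&: S|)%N.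

Definition dev_drop_ok (drop : history -> {set 'I_m}) : Prop :=
  forall h, drop h \subset remaining h /\ (remaining h != set0 -> drop h != set0).

End DraftAuction.

From HB Require Import structures.
From mathcomp Require Import all_boot all_order all_algebra.
From mathcomp Require Import zify lra.
Import Order.TTheory GRing.Theory Num.Theory.
Local Open Scope ring_scope.
Set Implicit Arguments. Unset Strict Implicit.

(* Write b' = (b_i', b_{-i}) and
   b^* = vhat/2.  The heart of the proof is the payment bound
     P_i(b') <= P_i(b) + b^* s^*,
   proved by running the two auctions side by side.  While the deviator is
   active and b_{it} >= b^*, she submits exactly her original action, so both
   auctions perform the same round.  If b_{it} < b^* and she loses, the winner
   also wins under b (only her own bid went up), so again the rounds agree.
   If she wins with b^*, she pays b^* (s^* - k_{i,<t}) <= b^* s^*, completes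
   s^* units and is inactive from then on; an inactive deviator bids 0 and
   pays nothing, while payments under b only grow.  Inactivity is stable
   because the units k she holds never decrease and k plus the units still
   available never increases.  The theorem follows: she values her >= s^*
   units at >= s^* vhat, so u_i(b') >= s^* vhat - P_i(b) - b^* s^*. *)

(* A set-counting fact behind the stability of inactivity: moving a part of
   an available block B into one's holdings does not increase
   "units held + units available". *)
Lemma card_transfer_budget (T : finType) (W A B X S : {set T}) :
  X \subset B -> B \subset A ->
  (#|(W :|: X) :&: S| + #|(A :\: B) :&: S| <= #|W :&: S| + #|A :&: S|)%N.
Proof.
move=> sXB sBA.
have cardWX : (#|(W :|: X) :&: S| <= #|W :&: S| + #|X :&: S|)%N.
  by rewrite setIUl cardsU leq_subr.
have cardXB : (#|X :&: S| <= #|B :&: S|)%N by apply/subset_leq_card/setSI.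
have splitA := cardsID B (A :&: S).
have inB : A :&: S :&: B = B :&: S.
  apply/setP=> x; rewrite !inE.
  by case: (boolP (x \in B)) => [/(subsetP sBA)->|_]; rewrite ?andbT ?andbF.
have outB : A :&: S :\: B = (A :\: B) :&: S.
  by apply/setP=> x; rewrite !inE; case: (x \in A); case: (x \in B); case: (x \in S).
rewrite inB outB in splitA; lia.
Qed.

Section HighBidder.
Variables (R : realFieldType) (n : nat).
Implicit Types (bids : 'I_n -> R) (j w : 'I_n).

Definition is_high_bidder bids j : bool :=
  [forall k, (bids k < bids j) || ((bids k == bids j) && (j <= k)%N)].

Lemma is_high_bidder_uniq bids j j' :
  is_high_bidder bids j -> is_high_bidder bids j' -> j = j'.
Proof.
move=> /forallP/(_ j') + /forallP/(_ j).
case/orP=> [lt1|/andP[/eqP e1 le1]]; case/orP=> [lt2|/andP[/eqP e2 le2]].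
- by have := lt_trans lt1 lt2; rewrite ltxx.
- by move: lt1; rewrite e2 ltxx.
- by move: lt2; rewrite e1 ltxx.
- by apply/val_inj/eqP; rewrite eqn_leq le1 le2.
Qed.

(* Among the maximal bids, the smallest index is the highest bidder. *)
Lemma is_high_bidder_exists bids (j0 : 'I_n) : exists j, is_high_bidder bids j.
Proof.
have [jmax _ maxP] := @arg_maxP _ R _ j0 predT bids isT.
have [j /eqP bid_j minP] :=
  @arg_minnP _ jmax [pred j | bids j == bids jmax] val (eqxx _).
exists j; apply/forallP=> k; rewrite bid_j.
have [ek|ltk] := eqVneq (bids k) (bids jmax).
  by rewrite ek ltxx /=; apply: minP; rewrite /= ek.
by have /= := maxP k isT; rewrite le_eqVlt (negbTE ltk) /= => ->.
Qed.

Lemma high_bidder_eq bids w : is_high_bidder bids w -> high_bidder bids = Some w.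
Proof.
move=> hw; rewrite /high_bidder; case: pickP => [j hj|none].
  by congr Some; apply: is_high_bidder_uniq hj hw.
by move: (none w); rewrite -/(is_high_bidder bids w) hw.
Qed.

Lemma high_bidderP bids (j0 : 'I_n) :
  exists2 w, high_bidder bids = Some w & is_high_bidder bids w.
Proof.
by have [w hw] := is_high_bidder_exists bids j0; exists w => //; apply: high_bidder_eq.
Qed.

Lemma high_bidder_ext bids1 bids2 : bids1 =1 bids2 -> high_bidder bids1 = high_bidder bids2.
Proof. by move=> E; apply: eq_pick => j; apply: eq_forallb => k; rewrite !E. Qed.

Lemma is_high_bidder_raise bids bids' (i w : 'I_n) :
  w != i -> (forall j, j != i -> bids' j = bids j) -> bids i <= bids' i ->
  is_high_bidder bids' w -> is_high_bidder bids w.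
Proof.
move=> wi same raise /forallP high'; apply/forallP => k.
have [->|ki] := eqVneq k i; last by have := high' k; rewrite (same w wi) (same k ki).
have := high' i; rewrite (same w wi).
have [//|ge_iw /=] := ltP (bids i) (bids w).
case/orP=> [lt|/andP[/eqP e wi_le]].
  by have := le_lt_trans (le_trans ge_iw raise) lt; rewrite ltxx.
have -> : bids i = bids w by apply/eqP; rewrite eq_le ge_iw -e raise.
by rewrite eqxx.
Qed.

End HighBidder.

Section Histories.
Variables (R : realFieldType) (n m : nat).
Implicit Types (h : history R n m) (r : record R n m) (b : profile R n m).

Definition units_won (j : 'I_n) (S : {set 'I_m}) h : nat := #|won j h :&: S|.
Definition units_left (S : {set 'I_m}) h : nat := #|remaining h :&: S|.

Lemma paid_rcons j h r : paid j (rcons h r) =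
  paid j h + (if rec_winner r == j then rec_bid r * (#|rec_bundle r|)%:R else 0).
Proof. by rewrite /paid big_rcons. Qed.

Lemma won_rcons j h r : won j (rcons h r) =
  won j h :|: (if rec_winner r == j then rec_bundle r else set0).
Proof. by rewrite /won big_rcons. Qed.

Lemma remaining_rcons h r : remaining (rcons h r) = remaining h :\: rec_bundle r.
Proof. by rewrite /remaining big_rcons /= setCU setDE. Qed.

Lemma won_remaining_disjoint j h : [disjoint won j h & remaining h].
Proof.
rewrite -[remaining h]setCK -subsets_disjoint /remaining setCK (bigID (fun r => rec_winner r == j) predT) /=.
exact: subsetUl.
Qed.

Lemma units_won_rcons j S h r : (units_won j S h <= units_won j S (rcons h r))%N.
Proof. by apply/subset_leq_card/setSI; rewrite won_rcons subsetUl. Qed.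

Lemma units_budget_rcons j S h r : rec_bundle r \subset remaining h ->
  (units_won j S (rcons h r) + units_left S (rcons h r)
     <= units_won j S h + units_left S h)%N.
Proof.
move=> legal; rewrite /units_won /units_left won_rcons remaining_rcons.
by apply: card_transfer_budget legal; case: ifP => _; rewrite ?sub0set.
Qed.

Lemma step_ext b1 b2 h : (forall j, b1 j h = b2 j h) -> step b1 h = step b2 h.
Proof.
move=> same; rewrite /step (@high_bidder_ext _ _ _ (fun j => (b2 j h).1)).
  by case: high_bidder => // w; rewrite same.
by move=> j; rewrite same.
Qed.

Lemma step_winner b (j0 : 'I_n) h : exists2 w,
  step b h = rcons h (w, (b w h).1, (b w h).2) & is_high_bidder (fun j => (b j h).1) w.
Proof. by have [w hw Pw] := high_bidderP (fun j => (b j h).1) j0; exists w => //; rewrite /step hw. Qed.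

Lemma paid_run_mono b (j : 'I_n) : (forall k h, 0 <= (b k h).1) ->
  forall fuel h, paid j h <= paid j (run b fuel h).
Proof.
move=> bid_ge0; elim=> [//|fuel IH] h /=; case: ifP => // _.
have [w -> _] := step_winner b j h; apply: le_trans (IH _).
rewrite paid_rcons; case: eqP => _; rewrite ?addr0 //.
by rewrite lerDl mulr_ge0 ?ler0n ?bid_ge0.
Qed.

End Histories.

Section CoreDeviation.
Variables (R : realFieldType) (n m : nat) (i : 'I_n) (S : {set 'I_m}) (vhat : R).
Variables (pick drop : history R n m -> {set 'I_m}) (b : profile R n m).
Hypotheses (vhat_ge0 : 0 <= vhat) (b_valid : forall j, valid_strategy (b j)).
Hypotheses (pick_ok : dev_pick_ok i S pick) (drop_ok : dev_drop_ok drop).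
Implicit Types (h : history R n m).

Let b' := upd b i (core_deviation i vhat S pick drop (b i)).

Lemma dev_activeE h : dev_active i S h =
  (units_won i S h < sstar S)%N && (sstar S - units_won i S h <= units_left S h)%N.
Proof. by []. Qed.

Lemma b'_other j : j != i -> b' j = b j.
Proof. by rewrite /b' /upd => /negbTE->. Qed.

Lemma b'_inactive h : ~~ dev_active i S h -> b' i h = (0, drop h).
Proof. by rewrite /b' /upd eqxx /core_deviation => /negbTE->. Qed.

Lemma b'_active h : dev_active i S h ->
  b' i h = if (b i h).1 < vhat / 2 then (vhat / 2, pick h) else b i h.
Proof. by rewrite /b' /upd eqxx /core_deviation => ->. Qed.

Lemma b'_legal j h : 0 <= (b' j h).1 /\ (b' j h).2 \subset remaining h.
Proof.
have [->|ji] := eqVneq j i; last by rewrite b'_other //; have [? []] := b_valid j h.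
have [act|inact] := boolP (dev_active i S h); last by rewrite b'_inactive //; have [] := drop_ok h.
rewrite b'_active //; case: ifP => _; last by have [? []] := b_valid i h.
split; first by rewrite divr_ge0.
by have [sub _] := pick_ok act; apply: subset_trans sub (subsetIl _ _).
Qed.

Lemma inactive_rcons h (w : 'I_n) (x : R) (B : {set 'I_m}) :
  B \subset remaining h -> ~~ dev_active i S h -> ~~ dev_active i S (rcons h (w, x, B)).
Proof.
move=> legal; rewrite !dev_activeE.
have := units_won_rcons i S h (w, x, B).
have := @units_budget_rcons R n m i S h (w, x, B) legal.
by lia.
Qed.

(* Winning her pick completes exactly s^* units, so she then drops out. *)
Lemma inactive_after_pick h (x : R) :
  dev_active i S h -> ~~ dev_active i S (rcons h (i, x, pick h)).
Proof.
move=> act; have [sub card_pick] := pick_ok act.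
have pickS : pick h \subset S := subset_trans sub (subsetIr _ _).
have pickR : pick h \subset remaining h := subset_trans sub (subsetIl _ _).
have fresh : won i h :&: S :&: pick h = set0.
  exact/disjoint_setI0/(disjointW (subsetIl _ _) pickR (won_remaining_disjoint i h)).
have held : units_won i S (rcons h (i, x, pick h)) = sstar S.
  rewrite /units_won won_rcons eqxx setIUl (setIidPl pickS) cardsU fresh cards0 subn0.
  by rewrite card_pick; move: act; rewrite dev_activeE /units_won; lia.
by rewrite dev_activeE held ltnn.
Qed.

(* An inactive deviator bids 0, so her payment is frozen from then on. *)
Lemma paid_inactive fuel h : ~~ dev_active i S h -> paid i (run b' fuel h) = paid i h.
Proof.
elim: fuel h => [//|fuel IH] h inact /=; case: ifP => // _.
have [w -> _] := step_winner b' i h; have [_ legal] := b'_legal w h.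
rewrite IH ?inactive_rcons // paid_rcons /=.
have [->|_] := eqVneq w i; last by rewrite addr0.
by rewrite b'_inactive //= mul0r addr0.
Qed.

Lemma step_deviation h : dev_active i S h ->
  step b' h = step b h \/ step b' h = rcons h (i, vhat / 2, pick h).
Proof.
move=> act; have b'_i := b'_active act.
have [low|high] := boolP ((b i h).1 < vhat / 2); last first.
  left; apply: step_ext => j; have [->|ji] := eqVneq j i; last by rewrite b'_other.
  by rewrite b'_i (negbTE high).
rewrite low in b'_i.
have [w -> win'] := step_winner b' i h.
have [->|wi] := eqVneq w i; first by right; rewrite b'_i.
left; rewrite b'_other //.
have win : is_high_bidder (fun j => (b j h).1) w.
  apply: (is_high_bidder_raise wi _ _ win') => [j ji|]; first by rewrite b'_other.
  by rewrite b'_i ltW.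
by rewrite /step (high_bidder_eq win).
Qed.

Lemma paid_deviation_bound fuel h :
  paid i (run b' fuel h) <= paid i (run b fuel h) + vhat / 2 * (sstar S)%:R.
Proof.
have half_ge0 : 0 <= vhat / 2 by rewrite divr_ge0.
have b_mono := paid_run_mono i (fun j h => proj1 (b_valid j h)).
elim: fuel h => [|fuel IH] h; first by rewrite /= lerDl mulr_ge0.
have [act|inact] := boolP (dev_active i S h); last first.
  by rewrite paid_inactive //; apply: le_trans (b_mono fuel.+1 h) _; rewrite lerDl mulr_ge0.
have := b_mono fuel.+1 h; rewrite /=; case: ifP => _ b_grows.
  by rewrite lerDl mulr_ge0.
have [->|->] := step_deviation act; first exact: IH.
rewrite paid_inactive ?inactive_after_pick // paid_rcons eqxx /=.
have [_ ->] := pick_ok act.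
by rewrite lerD // ler_wpM2l // ler_nat leq_subr.
Qed.

End CoreDeviation.

Lemma chval_lower_bound (R : realFieldType) (m : nat) (vhat : R) (S T : {set 'I_m}) :
  0 <= vhat -> (sstar S <= #|T :&: S|)%N -> vhat * (sstar S)%:R <= chval vhat S T.
Proof. by move=> vhat_ge0 enough; rewrite ler_wpM2l // ler_nat. Qed.

Theorem mainTheorem7 (R : realFieldType) (n m : nat) (i : 'I_n)
    (S : {set 'I_m}) (vhat : R) (pick drop : history R n m -> {set 'I_m})
    (b : profile R n m) :
  0 <= vhat ->
  (forall j, valid_strategy (b j)) ->
  dev_pick_ok i S pick ->
  dev_drop_ok drop ->
  (sstar S <= #|won i (outcome (upd b i (core_deviation i vhat S pick drop (b i)))) :&: S|)%N ->
  utility i (chval vhat S) (upd b i (core_deviation i vhat S pick drop (b i)))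
    >= (sstar S)%:R * vhat / 2 - payment i b.
Proof.
move=> vhat_ge0 b_valid pick_ok drop_ok enough.
have overpay := paid_deviation_bound vhat_ge0 b_valid pick_ok drop_ok m [::].
have value := chval_lower_bound vhat_ge0 enough.
rewrite /utility /payment /outcome in value overpay *.
set s := (sstar S)%:R in overpay value *.
lra.
Qed.
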